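(* Let $\{X_\gamma\}_{\gamma\in\Gamma}$ be a family of strictly convex real Banach spaces with $\dim(X_\gamma)\geq 2$ for every $\gamma\in\Gamma$, and let $Z_\infty=\bigoplus^{\ell_\infty}_{\gamma\in\Gamma}X_\gamma$. Then every element $z\in B_{Z_\infty}$ can be written as $z=\frac12(x+y)$ with $x,y$ extreme points of $B_{Z_\infty}$.
   Context: All Banach spaces are real. $Z_\infty=\bigoplus^{\ell_\infty}_{\gamma\in\Gamma}X_\gamma$ is the space of families $z=(z(\gamma))_{\gamma\in\Gamma}$ with $z(\gamma)\in X_\gamma$ and $\|z\|=\sup_\gamma\|z(\gamma)\|<\infty$; $B_{Z_\infty}$ is its closed unit ball. A Banach space is strictly convex if every point of its unit sphere is an extreme point of its closed unit ball. *)

From HB Require Import structures.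
From mathcomp Require Import all_boot all_order all_algebra.
From mathcomp Require Import all_classical all_reals topology normedtype.
Set Implicit Arguments. Unset Strict Implicit. Unset Printing Implicit Defensive.
Import Order.TTheory GRing.Theory Num.Theory.
Import numFieldNormedType.Exports.
Local Open Scope classical_set_scope.
Local Open Scope ring_scope.

Definition unit_ball {R : realType} (V : normedModType R) : set V :=
  [set x : V | `|x| <= 1].

Definition extreme_point {R : realType} (V : lmodType R) (A : set V) (x : V) :=
  A x /\ forall (u v : V) (t : R), A u -> A v -> 0 < t < 1 ->
    x = t *: u + (1 - t) *: v -> u = v.

Definition strictly_convex {R : realType} (V : normedModType R) :=
  forall x : V, `|x| = 1 -> extreme_point (@unit_ball R V) x.

Definition dim_ge2 {R : realType} (V : lmodType R) :=
  exists x y : V, forall a b : R, a *: x + b *: y = 0 -> a = 0 /\ b = 0.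

(* closed unit ball of Z_infty = l_infty-sum of the X g:
   families z with sup_g |z g| <= 1, i.e. |z g| <= 1 for all g *)
Definition Zinf_ball {R : realType} (G : Type) (X : G -> normedModType R) :
  set (forall g, X g) := [set z | forall g, `|z g| <= 1].

Definition Zinf_extreme {R : realType} (G : Type) (X : G -> normedModType R)
  (z : forall g, X g) :=
  @Zinf_ball R G X z /\ forall (u v : forall g, X g) (t : R),
    @Zinf_ball R G X u -> @Zinf_ball R G X v -> 0 < t < 1 ->
    (forall g, z g = t *: u g + (1 - t) *: v g) -> u = v.

From HB Require Import structures.
From mathcomp Require Import all_boot all_order all_algebra.
From mathcomp Require Import all_classical all_reals topology normedtype.
From mathcomp Require Import lra.
Set Implicit Arguments.
Unset Strict Implicit.
Import Order.TTheory GRing.Theory Num.Theory.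
Import numFieldNormedType.Exports.
Local Open Scope ring_scope.

(* The norm of Z_infty is the supremum of the coordinate norms, so by strict
   convexity of each X_g a family of unit vectors is an extreme point of
   B_{Z_infty}; it therefore suffices to write each w in B_X as the midpoint of
   two unit vectors.  For w <> 0 pick v independent of w: then
   q t = (1 - 2t) w + (t - t^2) v never vanishes, and p t = q t / |q t| runs on
   the unit sphere from w/|w| to -w/|w|.  Along it |2w - p t| goes from
   |2|w| - 1| <= 1 to 2|w| + 1 >= 1, so by the intermediate value theorem
   p t and 2w - p t are both unit vectors for some t. *)

Section LinearIndependence.
Variables (R : realType) (V : lmodType R).

Definition independent2 (x y : V) :=
  forall a b : R, a *: x + b *: y = 0 -> a = 0 /\ b = 0.

Lemma independent2_neq0 {x y : V} : independent2 x y -> x != 0.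
Proof.
move=> ixy; apply/eqP => x0; have := ixy 1 0.
by rewrite x0 scaler0 scale0r addr0 => /(_ erefl) [/eqP]; rewrite oner_eq0.
Qed.

Lemma dependent2_colinear {w v : V} :
  w != 0 -> ~ independent2 w v -> exists c : R, v = c *: w.
Proof.
move=> w0 /existsNP [a /existsNP [b /not_implyP [abwv not0]]].
have b0 : b != 0.
  apply/eqP => b0; apply: not0; split => //.
  move: abwv; rewrite b0 scale0r addr0 => /eqP.
  by rewrite scaler_eq0 (negPf w0) orbF => /eqP.
exists (- (a / b)); apply: (scalerI b0).
rewrite scalerA mulrN mulrCA divff // mulr1 scaleNr.
by apply/eqP; rewrite -addr_eq0 addrC abwv.
Qed.

Lemma dim_ge2_independent2 (w : V) :
  dim_ge2 V -> w != 0 -> exists v : V, independent2 w v.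
Proof.
move=> [x [y ixy]] w0.
have [ix|/(dependent2_colinear w0) [c xE]] := pselect (independent2 w x).
  by exists x.
have [iy|/(dependent2_colinear w0) [d yE]] := pselect (independent2 w y).
  by exists y.
have [_ /eqP] : d = 0 /\ - c = 0.
  by apply: ixy; rewrite xE yE !scalerA mulNr [d * c]mulrC scaleNr addrN.
rewrite oppr_eq0 => /eqP c0.
by move: (independent2_neq0 ixy); rewrite xE c0 scale0r eqxx.
Qed.

End LinearIndependence.

Section UnitDecomposition.
Variables (R : realType) (V : normedModType R).

Definition unit_decomposition (w : V) (xy : V * V) :=
  [/\ `|xy.1| = 1, `|xy.2| = 1 & w = 2^-1 *: (xy.1 + xy.2)].

Definition normalize (u : V) : V := `|u|^-1 *: u.

Lemma norm_normalize (u : V) : u != 0 -> `|normalize u| = 1.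
Proof. by move=> u0; rewrite normrZ normfV normr_id mulVf ?normr_eq0. Qed.

Lemma normalizeN (u : V) : normalize (- u) = - normalize u.
Proof. by rewrite /normalize normrN scalerN. Qed.

Lemma norm_scale_sub_normalize (s : R) (u : V) :
  u != 0 -> `|s *: u - normalize u| = `|s * `|u| - 1|.
Proof.
move=> u0; have -> : s * `|u| - 1 = (s - `|u|^-1) * `|u|.
  by rewrite mulrBl mulVf ?normr_eq0.
by rewrite -scalerBl normrZ normrM normr_id.
Qed.

Lemma normalize_continuous (u : V) : u != 0 -> {for u, continuous normalize}.
Proof.
move=> u0; apply: continuousZ; last exact: cvg_id.
by apply: continuousV; [rewrite normr_eq0 | exact: norm_continuous].
Qed.

Lemma unit_decomposition_of_path (w : V) (p : R -> V) :
  continuous p -> (forall t, `|p t| = 1) ->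
  `|2 *: w - p 0| <= 1 -> 1 <= `|2 *: w - p 1| ->
  exists xy, unit_decomposition w xy.
Proof.
move=> cp p1 f0 f1.
have [c _ fc] : exists2 c, c \in `[0, 1] & `|2 *: w - p c| = 1.
  apply: IVT => //; last by rewrite ge_min le_max f0 f1 orbT.
  apply: continuous_subspaceT => t.
  by apply: cvg_norm; apply: cvgB; [exact: cvg_cst | exact: cp].
exists (p c, 2 *: w - p c); split => //=.
by rewrite addrC subrK scalerA mulVf ?scale1r ?pnatr_eq0.
Qed.

End UnitDecomposition.
Arguments normalize {R V} u.

Section Arc.
Variables (R : realType) (V : normedModType R).

Definition arc (w v : V) (t : R) : V := (1 - 2 * t) *: w + (t - t ^+ 2) *: v.

Lemma arc0 (w v : V) : arc w v 0 = w.
Proof. by rewrite /arc mulr0 subr0 expr0n subrr scale0r addr0 scale1r. Qed.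

Lemma arc1 (w v : V) : arc w v 1 = - w.
Proof.
rewrite /arc mulr1 expr1n subrr scale0r addr0.
have -> : 1 - 2 = - 1 :> R by lra.
exact: scaleN1r.
Qed.

Lemma arc_neq0 (w v : V) (t : R) : independent2 w v -> arc w v t != 0.
Proof. by move=> iwv; apply/eqP => /iwv[]; rewrite expr2; nra. Qed.

Lemma arc_continuous (w v : V) : continuous (arc w v).
Proof.
move=> t; apply: cvgD; apply: cvgZ; try exact: cvg_cst.
  apply: cvgB; first exact: cvg_cst.
  by apply: cvgM; [exact: cvg_cst | exact: cvg_id].
by apply: cvgB; [exact: cvg_id | rewrite expr2; apply: cvgM; exact: cvg_id].
Qed.

End Arc.

Section BallDecomposition.
Variables (R : realType) (V : normedModType R).
Hypothesis dimV : dim_ge2 V.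

Lemma unit_decomposition0 : exists xy : V * V, unit_decomposition 0 xy.
Proof.
have [x [y /independent2_neq0 x0]] := dimV.
exists (normalize x, - normalize x); split; rewrite ?normrN ?norm_normalize //=.
by rewrite subrr scaler0.
Qed.

Lemma exists_unit_decomposition (w : V) :
  `|w| <= 1 -> exists xy, unit_decomposition w xy.
Proof.
move=> w1; have [->|w0] := eqVneq w 0; first exact: unit_decomposition0.
have [v iwv] := dim_ge2_independent2 dimV w0.
have w_gt0 : 0 < `|w| by rewrite normr_gt0.
apply: (unit_decomposition_of_path (p := normalize \o arc w v)) => /=.
- move=> t; apply: continuous_comp; first exact: arc_continuous.
  exact/normalize_continuous/arc_neq0.
- by move=> t; apply/norm_normalize/arc_neq0.
- by rewrite arc0 norm_scale_sub_normalize // ler_norml; lra.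
- rewrite arc1 normalizeN opprK -normrN opprD -scaleNr.
  by rewrite norm_scale_sub_normalize // ler0_norm; lra.
Qed.

End BallDecomposition.

Lemma Zinf_extreme_unit (R : realType) (G : Type) (X : G -> normedModType R)
    (x : forall g, X g) :
  (forall g, strictly_convex (X g)) -> (forall g, `|x g| = 1) ->
  Zinf_extreme x.
Proof.
move=> scX x1; split=> [g|u v t uB vB t01 xE]; first by rewrite x1.
apply: functional_extensionality_dep => g.
have [_ x_extreme] := scX g _ (x1 g).
exact: x_extreme (uB g) (vB g) t01 (xE g).
Qed.

Theorem proposition2p5 (R : realType) (G : Type)
  (X : G -> completeNormedModType R)
  (hsc : forall g, strictly_convex (X g))
  (hdim : forall g, dim_ge2 (X g)) :
  forall z : (forall g, X g), @Zinf_ball R G X z ->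
    exists x y : (forall g, X g),
      @Zinf_extreme R G X x /\ @Zinf_extreme R G X y /\
      forall g, z g = 2^-1 *: (x g + y g).
Proof.
move=> z zB.
have dec g : {xy : X g * X g | unit_decomposition (z g) xy}.
  exact/cid/(exists_unit_decomposition (hdim g)).
exists (fun g => (sval (dec g)).1), (fun g => (sval (dec g)).2).
split; [|split].
- by apply: Zinf_extreme_unit => // g; have [] := svalP (dec g).
- by apply: Zinf_extreme_unit => // g; have [] := svalP (dec g).
- by move=> g; have [] := svalP (dec g).
Qed.
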